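(* In the coordinates $[z_0,z_1,z_2,z_3,x]$, the four points $\mathbf p_1,\dots,\mathbf p_4$, namely $[-1,0,1,0,0]$, $[0,-1,0,1,0]$, $[0,1,0,1,0]$, $[1,0,1,0,0]$, are singular points of every curve $HC_F(\mathbf v,d)$, $[\mathbf v,d]\in\mathbb{C}P^4$. The four points $[0,0,1,1,\sqrt{-1}]$, $[0,0,1,1,-\sqrt{-1}]$, $[0,0,1,-1,\sqrt{-1}]$, $[0,0,1,-1,-\sqrt{-1}]$ are not singular points of $HC_F(\mathbf v,d)$ if $v_{j1}^2+v_{j2}^2\neq 0$ for $j=1$ or for $j=2$. Consequently, for generic $[\mathbf v,d]$ the only singular points of $HC_F(\mathbf v,d)$ are $\mathbf p_1,\mathbf p_2,\mathbf p_3,\mathbf p_4$; moreover the conditions defining this generic set include that $v_{j1}^2+v_{j2}^2\neq0$ for $j=1$ or for $j=2$.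
   Context: On $\mathbb{C}P^4$ use homogeneous coordinates $[z_0,z_1,z_2,z_3,x]$. For parameters $[\mathbf v,d]=[v_{11},v_{12},v_{21},v_{22},d]\in\mathbb{C}P^4$ (complex, not all zero), $HC_F(\mathbf v,d)$ is the subvariety of $\mathbb{C}P^4$ defined by the three quadrics $z_2^2-z_0^2-(z_3^2-z_1^2)=0$, $x^2+z_2^2-z_0^2=0$, and $(v_{22}z_0-v_{12}z_1)x+v_{21}z_0z_3-v_{11}z_1z_2-dz_0z_1=0$. (These coordinates relate to coordinates $[u,y_1,y_2,r_1,r_2]$ by $z_0=4r_1$, $z_1=4r_2$, $z_2=4(u-y_1)$, $z_3=-4(u+y_1)$, $x=-4y_2$; then the first two quadrics cut out the surface $\{(u-y_1)^2+y_2^2=r_1^2,\ (u+y_1)^2+y_2^2=r_2^2\}$.) A point of $HC_F(\mathbf v,d)$ is singular if the $3\times5$ Jacobian matrix of these three defining polynomials has rank less than $3$ there. ''For generic $[\mathbf v,d]$'' means: for all $[\mathbf v,d]$ in some nonempty Zariski-open subset of the parameter space $\mathbb{C}P^4$ (the complement of the common zero set of finitely many homogeneous polynomials in $v_{11},v_{12},v_{21},v_{22},d$). *)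

From HB Require Import structures.
From mathcomp Require Import all_boot all_order all_algebra.
From mathcomp Require Import mpoly.
Set Implicit Arguments. Unset Strict Implicit. Unset Printing Implicit Defensive.
Import Order.TTheory GRing.Theory Num.Theory.
Local Open Scope ring_scope.

(* Coordinates on CP^4: [z0, z1, z2, z3, x] are indices 0..4 of 'I_5.
   Parameters [v11, v12, v21, v22, d] are likewise indices 0..4 of 'I_5.
   A point / parameter is represented by a homogeneous coordinate vector
   'I_5 -> C. *)
Definition i0 : 'I_5 := @Ordinal 5 0 isT.
Definition i1 : 'I_5 := @Ordinal 5 1 isT.
Definition i2 : 'I_5 := @Ordinal 5 2 isT.
Definition i3 : 'I_5 := @Ordinal 5 3 isT.
Definition i4 : 'I_5 := @Ordinal 5 4 isT.

Section HC.
Variable C : numClosedFieldType.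

Definition v11 (p : 'I_5 -> C) := p i0.
Definition v12 (p : 'I_5 -> C) := p i1.
Definition v21 (p : 'I_5 -> C) := p i2.
Definition v22 (p : 'I_5 -> C) := p i3.
Definition dpar (p : 'I_5 -> C) := p i4.

Definition nonzero5 (w : 'I_5 -> C) : Prop := exists i, w i != 0.

Definition Z0 : {mpoly C[5]} := 'X_i0.
Definition Z1 : {mpoly C[5]} := 'X_i1.
Definition Z2 : {mpoly C[5]} := 'X_i2.
Definition Z3 : {mpoly C[5]} := 'X_i3.
Definition XX : {mpoly C[5]} := 'X_i4.

Definition HCq1 : {mpoly C[5]} := Z2 ^+ 2 - Z0 ^+ 2 - (Z3 ^+ 2 - Z1 ^+ 2).
Definition HCq2 : {mpoly C[5]} := XX ^+ 2 + Z2 ^+ 2 - Z0 ^+ 2.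
Definition HCq3 (p : 'I_5 -> C) : {mpoly C[5]} :=
  ((v22 p)%:MP * Z0 - (v12 p)%:MP * Z1) * XX + (v21 p)%:MP * Z0 * Z3
  - (v11 p)%:MP * Z1 * Z2 - (dpar p)%:MP * Z0 * Z1.

Definition HCeqs (p : 'I_5 -> C) (k : 'I_3) : {mpoly C[5]} :=
  nth 0 [:: HCq1; HCq2; HCq3 p] k.

Definition HCjac (p : 'I_5 -> C) (z : 'I_5 -> C) : 'M[C]_(3, 5) :=
  \matrix_(k < 3, j < 5) ((HCeqs p k)^`M(j)).@[z].

Definition on_HC (p : 'I_5 -> C) (z : 'I_5 -> C) : Prop :=
  nonzero5 z /\ forall k : 'I_3, (HCeqs p k).@[z] = 0.

Definition HC_singular (p : 'I_5 -> C) (z : 'I_5 -> C) : Prop :=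
  on_HC p z /\ (\rank (HCjac p z) < 3)%N.

Definition proj_eq (z w : 'I_5 -> C) : Prop :=
  exists c : C, c != 0 /\ forall i, z i = c * w i.

Definition vec5 (a b c d e : C) : 'I_5 -> C :=
  fun i => nth 0 [:: a; b; c; d; e] i.

Definition HCp (k : 'I_4) : 'I_5 -> C :=
  nth (vec5 0 0 0 0 0)
    [:: vec5 (-1) 0 1 0 0; vec5 0 (-1) 0 1 0; vec5 0 1 0 1 0; vec5 1 0 1 0 0] k.

Definition HCq (k : 'I_4) : 'I_5 -> C :=
  nth (vec5 0 0 0 0 0)
    [:: vec5 0 0 1 1 'i; vec5 0 0 1 1 (- 'i);
        vec5 0 0 1 (-1) 'i; vec5 0 0 1 (-1) (- 'i)] k.

Definition nondeg_v (p : 'I_5 -> C) : Prop :=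
  v11 p ^+ 2 + v12 p ^+ 2 != 0 \/ v21 p ^+ 2 + v22 p ^+ 2 != 0.

Definition homog_family (S : seq {mpoly C[5]}) : Prop :=
  forall P, P \in S -> exists n : nat, P \is [in C[5], n.-homog].

Definition outside_zeros (S : seq {mpoly C[5]}) (p : 'I_5 -> C) : Prop :=
  exists2 P, P \in S & P.@[p] != 0.

End HC.

(* At a singular point z of HC_F(v, d) some u <> 0 satisfies
   u1 grad q1 + u2 grad q2 + u3 grad q3 = 0.  If u3 = 0, z is a singular point
   of the surface q1 = q2 = 0, whose only singular points are p_1, ..., p_4.
   If u3 <> 0 and x <> 0, the conics z0^2 = z2^2 + x^2 and z1^2 = z3^2 + x^2
   are rational with parameters m and n, and z becomes a singular point of a
   curve F(m, n) = A(m) n^2 + B(m) n + C(m) = 0; hence m is a double root of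
   B^2 - 4 A C and its discriminant vanishes.  If u3 <> 0 and x = 0, one of
   v12, v22, +-v21 - d +- v11 vanishes.  So the product of the discriminant,
   these six linear forms and v11^2 + v12^2, a homogeneous polynomial that is
   nonzero at [0, 1, 0, 1, 1], cuts out the generic set.  At [0, 0, 1, +-1, +-i]
   the Lagrange equations force v11^2 + v12^2 = v21^2 + v22^2 = 0. *)

From HB Require Import structures.
From mathcomp Require Import all_boot all_order all_algebra.
From mathcomp Require Import mpoly ring zify.
Import Order.TTheory GRing.Theory Num.Theory.
Local Open Scope ring_scope.
Set Implicit Arguments. Unset Strict Implicit. Unset Printing Implicit Defensive.

Section QuarticDiscriminant.
Variable R : comNzRingType.

Definition quartic_disc (a b c d e : R) : R :=
  256 * a ^+ 3 * e ^+ 3 - 192 * a ^+ 2 * b * d * e ^+ 2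
  - 128 * a ^+ 2 * c ^+ 2 * e ^+ 2 + 144 * a ^+ 2 * c * d ^+ 2 * e
  - 27 * a ^+ 2 * d ^+ 4 + 144 * a * b ^+ 2 * c * e ^+ 2
  - 6 * a * b ^+ 2 * d ^+ 2 * e - 80 * a * b * c ^+ 2 * d * e
  + 18 * a * b * c * d ^+ 3 + 16 * a * c ^+ 4 * e - 4 * a * c ^+ 3 * d ^+ 2
  - 27 * b ^+ 4 * e ^+ 2 + 18 * b ^+ 3 * c * d * e - 4 * b ^+ 3 * d ^+ 3
  - 4 * b ^+ 2 * c ^+ 3 * e + b ^+ 2 * c ^+ 2 * d ^+ 2.

Lemma quartic_disc_double_root a b c d e r :
  a * r ^+ 4 + b * r ^+ 3 + c * r ^+ 2 + d * r + e = 0 ->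
  4 * a * r ^+ 3 + 3 * b * r ^+ 2 + 2 * c * r + d = 0 ->
  quartic_disc a b c d e = 0.
Proof.
move=> root_r root_r'.
have e_r : e = - (a * r ^+ 4 + b * r ^+ 3 + c * r ^+ 2 + d * r).
  by apply/eqP; rewrite -addr_eq0 addrC root_r.
have d_r : d = - (4 * a * r ^+ 3 + 3 * b * r ^+ 2 + 2 * c * r).
  by apply/eqP; rewrite -addr_eq0 addrC root_r'.
by rewrite /quartic_disc e_r d_r; ring.
Qed.

End QuarticDiscriminant.

Lemma rmorph_quartic_disc (R S : comNzRingType) (f : {rmorphism R -> S}) a b c d e :
  f (quartic_disc a b c d e) = quartic_disc (f a) (f b) (f c) (f d) (f e).
Proof.
by rewrite /quartic_disc !(rmorphM f, rmorphD f, rmorphN f, rmorphXn f, rmorph_nat f).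
Qed.

Section HCGenericPolynomial.
Variables (R : comNzRingType) (v11 v12 v21 v22 d : R).

Local Notation a2 := (v21 - v11 - d).
Local Notation a1 := (- (2 * v12)).
Local Notation a0 := (v21 + v11 - d).
Local Notation b := (2 * v22).
Local Notation c2 := (- (v21 + v11 + d)).
Local Notation c0 := (v11 - v21 - d).

(* w(m, n) = [n (m^2 + 1), m (n^2 + 1), n (m^2 - 1), m (n^2 - 1), 2 m n]
   parametrizes q1 = q2 = 0, and q3(w(m, n)) = m n hc_form m n. *)
Definition hcA (m : R) : R := a2 * m ^+ 2 + a1 * m + a0.
Definition hcB (m : R) : R := b * (m ^+ 2 + 1).
Definition hcC (m : R) : R := c2 * m ^+ 2 + a1 * m + c0.

Definition hc_form (m n : R) : R := hcA m * n ^+ 2 + hcB m * n + hcC m.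
Definition hc_form_dm (m n : R) : R :=
  (2 * a2 * m + a1) * n ^+ 2 + 2 * b * m * n + (2 * c2 * m + a1).
Definition hc_form_dn (m n : R) : R := 2 * hcA m * n + hcB m.

(* The discriminant of the quartic hcB^2 - 4 hcA hcC (the discriminant of
   hc_form in n), with its coefficients listed from m^4 down. *)
Definition hc_disc : R :=
  quartic_disc (b ^+ 2 - 4 * a2 * c2) (- (4 * a1 * (a2 + c2)))
    (2 * b ^+ 2 - 4 * (a2 * c0 + a1 ^+ 2 + a0 * c2)) (- (4 * a1 * (a0 + c0)))
    (b ^+ 2 - 4 * a0 * c0).

Definition hc_x0_factor : R := v12 * v22 * a2 * a0 * c2 * c0.

Definition hc_generic_poly : R := hc_disc * hc_x0_factor * (v11 ^+ 2 + v12 ^+ 2).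

Lemma hc_disc_eq0 m n :
  hc_form m n = 0 -> hc_form_dm m n = 0 -> hc_form_dn m n = 0 -> hc_disc = 0.
Proof.
(* B^2 - 4 A C = F_n^2 - 4 A F, and its m-derivative is a combination of
   F, F_m and F_n. *)
move=> F0 Fm0 Fn0; apply: (quartic_disc_double_root (r := m)).
  transitivity (hc_form_dn m n ^+ 2 - 4 * hcA m * hc_form m n).
    by rewrite /hc_form_dn /hc_form /hcA /hcB /hcC; ring.
  by rewrite F0 Fn0; ring.
transitivity (2 * hc_form_dn m n * (2 * (2 * a2 * m + a1) * n + 2 * b * m)
  - 4 * (2 * a2 * m + a1) * hc_form m n - 4 * hcA m * hc_form_dm m n).
  by rewrite /hc_form_dn /hc_form_dm /hc_form /hcA /hcB /hcC; ring.
by rewrite F0 Fm0 Fn0; ring.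
Qed.

End HCGenericPolynomial.

Lemma rmorph_hc_generic_poly (R S : comNzRingType) (f : {rmorphism R -> S})
    (v11 v12 v21 v22 d : R) :
  f (hc_generic_poly v11 v12 v21 v22 d) =
  hc_generic_poly (f v11) (f v12) (f v21) (f v22) (f d).
Proof.
by rewrite /hc_generic_poly /hc_disc /hc_x0_factor !rmorphM rmorph_quartic_disc
  !(rmorph_nat f, rmorphXn f, rmorphN f, rmorphM f, rmorphD f).
Qed.

Section Homogeneity.
Variables (k : nat) (R : comNzRingType).
Implicit Types p q : {mpoly R[k]}.

Lemma dhomogM_eq d e n p q :
  p \is d.-homog -> q \is e.-homog -> (d + e)%N = n -> p * q \is n.-homog.
Proof. by move=> hp hq <-; exact: dhomogM. Qed.

Lemma dhomogXn_eq d j n p : p \is d.-homog -> (d * j)%N = n -> p ^+ j \is n.-homog.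
Proof. by move=> hp <-; exact: dhomogMn. Qed.

Lemma dhomog_natrM d j p : p \is d.-homog -> j%:R * p \is d.-homog.
Proof. by move=> hp; rewrite mulr_natl rpredMn. Qed.

(* Degrees of factors are left as evars, fixed at the leaves, and the
   resulting degree equations are closed by [lia]. *)
Ltac dhomog :=
  repeat match goal with
  | |- is_true (in_mem (_ + _) _) => apply: dhomogD
  | |- is_true (in_mem (GRing.opp _) _) => rewrite dhomogN
  | |- is_true (in_mem (_%:R * _) _) => apply: dhomog_natrM
  | |- is_true (in_mem (_ * _) _) => apply: dhomogM_eq
  | |- is_true (in_mem (_ ^+ _) _) => apply: dhomogXn_eq
  | |- is_true (in_mem _ _) => eassumption
  | |- @eq nat _ _ => first [reflexivity | lia]
  end.

Lemma quartic_disc_dhomog n (a b c d e : {mpoly R[k]}) :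
  a \is n.-homog -> b \is n.-homog -> c \is n.-homog -> d \is n.-homog ->
  e \is n.-homog -> quartic_disc a b c d e \is (6 * n).-homog.
Proof. by move=> *; rewrite /quartic_disc; dhomog. Qed.

Lemma hc_generic_poly_dhomog (v11 v12 v21 v22 d : {mpoly R[k]}) :
  v11 \is 1.-homog -> v12 \is 1.-homog -> v21 \is 1.-homog ->
  v22 \is 1.-homog -> d \is 1.-homog ->
  hc_generic_poly v11 v12 v21 v22 d \is 20.-homog.
Proof.
move=> *; have ? : hc_disc v11 v12 v21 v22 d \is (6 * 2).-homog.
  by apply: quartic_disc_dhomog; dhomog.
by rewrite /hc_generic_poly /hc_x0_factor; dhomog.
Qed.
End Homogeneity.

(* The coordinates of u1 grad q1 + u2 grad q2 + u3 grad q3 at [z0, z1, z2, z3, x],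
   where q1, q2, q3 are the three quadrics defining HC_F(v, d). *)
Definition hc_lagrange (R : comNzRingType) (v11 v12 v21 v22 d z0 z1 z2 z3 x u1 u2 u3 : R) :=
  [/\ u3 * (v22 * x + v21 * z3 - d * z1) - 2 * (u1 + u2) * z0 = 0,
      2 * u1 * z1 - u3 * (v12 * x + v11 * z2 + d * z0) = 0,
      2 * (u1 + u2) * z2 - u3 * v11 * z1 = 0,
      u3 * v21 * z0 - 2 * u1 * z3 = 0 &
      2 * u2 * x + u3 * (v22 * z0 - v12 * z1) = 0].

Lemma conic_param (F : fieldType) (a b x : F) :
  2 != 0 :> F -> x != 0 -> x ^+ 2 = a ^+ 2 - b ^+ 2 ->
  exists2 m, m != 0 & a = x * (m ^+ 2 + 1) / (2 * m) /\ b = x * (m ^+ 2 - 1) / (2 * m).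
Proof.
move=> two0 x0 xx.
have ab0 : a + b != 0.
  apply: contra_neq x0 => ab0; apply/eqP; rewrite -sqrf_eq0.
  by rewrite xx subr_sqr ab0 mulr0.
exists ((a + b) / x); first by rewrite mulf_neq0 ?invr_eq0.
split.
  transitivity (((a + b) ^+ 2 + x ^+ 2) / (2 * (a + b))).
    by rewrite xx; field; rewrite ab0 two0.
  by field; rewrite x0 ab0 two0.
transitivity (((a + b) ^+ 2 - x ^+ 2) / (2 * (a + b))).
  by rewrite xx; field; rewrite ab0 two0.
by field; rewrite x0 ab0 two0.
Qed.

Section LagrangeSystem.
Variables (F : fieldType) (v11 v12 v21 v22 d z0 z1 z2 z3 x u1 u2 u3 : F).
Hypothesis lag : hc_lagrange v11 v12 v21 v22 d z0 z1 z2 z3 x u1 u2 u3.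

Lemma hc_lagrange_comb c0 c1 c2 c3 c4 t :
  t = c0 * (u3 * (v22 * x + v21 * z3 - d * z1) - 2 * (u1 + u2) * z0)
    + c1 * (2 * u1 * z1 - u3 * (v12 * x + v11 * z2 + d * z0))
    + c2 * (2 * (u1 + u2) * z2 - u3 * v11 * z1)
    + c3 * (u3 * v21 * z0 - 2 * u1 * z3)
    + c4 * (2 * u2 * x + u3 * (v22 * z0 - v12 * z1)) -> t = 0.
Proof. by case: lag => -> -> -> -> ->; rewrite !mulr0 !addr0. Qed.
Arguments hc_lagrange_comb : clear implicits.

Hypothesis two_neq0 : 2 != 0 :> F.
Hypothesis quadric0 : x ^+ 2 = z0 ^+ 2 - z2 ^+ 2.
Hypothesis quadric1 : x ^+ 2 = z1 ^+ 2 - z3 ^+ 2.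

Let mul2f_eq0 (a b : F) : a != 0 -> 2 * a * b = 0 -> b = 0.
Proof. by move=> a0 /eqP; rewrite !mulf_eq0 (negbTE two_neq0) (negbTE a0) => /eqP. Qed.

Lemma hc_lagrange_u3_eq0 : u3 = 0 -> (u1 != 0) || (u2 != 0) ->
  x = 0 /\ (z1 = 0 /\ z3 = 0 /\ z2 ^+ 2 = z0 ^+ 2 \/ z0 = 0 /\ z2 = 0 /\ z3 ^+ 2 = z1 ^+ 2).
Proof.
move=> u30; have [u10 /= nu2|nu1 _] := eqVneq u1 0.
  have x0 : x = 0.
    by apply: (mul2f_eq0 nu2); apply: (hc_lagrange_comb 0 0 0 0 1); rewrite u10 u30; ring.
  have z00 : z0 = 0.
    by apply: (mul2f_eq0 nu2); apply: (hc_lagrange_comb (-1) 0 0 0 0); rewrite u10 u30; ring.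
  have z20 : z2 = 0.
    by apply: (mul2f_eq0 nu2); apply: (hc_lagrange_comb 0 0 1 0 0); rewrite u10 u30; ring.
  split=> //; right; do 2!split=> //.
  by apply/eqP; rewrite eq_sym -subr_eq0 -quadric1 x0 sqrf_eq0.
have z10 : z1 = 0.
  by apply: (mul2f_eq0 nu1); apply: (hc_lagrange_comb 0 1 0 0 0); rewrite u30; ring.
have z30 : z3 = 0.
  by apply: (mul2f_eq0 nu1); apply: (hc_lagrange_comb 0 0 0 (-1) 0); rewrite u30; ring.
have x0 : x = 0 by apply/eqP; rewrite -sqrf_eq0 quadric1 z10 z30 subrr.
split=> //; left; do 2!split=> //.
by apply/eqP; rewrite eq_sym -subr_eq0 -quadric0 x0 sqrf_eq0.
Qed.

Lemma hc_lagrange_x_eq0 : u3 != 0 -> x = 0 -> ~ [/\ z0 = 0, z1 = 0, z2 = 0 & z3 = 0] ->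
  hc_x0_factor v11 v12 v21 v22 d = 0.
Proof.
move=> nu3 x0 nz.
have e20 : z2 ^+ 2 = z0 ^+ 2 by apply/eqP; rewrite eq_sym -subr_eq0 -quadric0 x0 sqrf_eq0.
have e31 : z3 ^+ 2 = z1 ^+ 2 by apply/eqP; rewrite eq_sym -subr_eq0 -quadric1 x0 sqrf_eq0.
have e4 : v12 * z1 = v22 * z0.
  apply/eqP; rewrite eq_sym -subr_eq0; apply/eqP; apply: (mulfI nu3).
  by rewrite mulr0; apply: (hc_lagrange_comb 0 0 0 0 1); rewrite x0; ring.
rewrite /hc_x0_factor; have [z00|nz0] := eqVneq z0 0.
  have z20 : z2 = 0 by apply/eqP; rewrite -sqrf_eq0 e20 sqrf_eq0 z00.
  have [->|nv12] := eqVneq v12 0; first by rewrite !mul0r.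
  have z10 : z1 = 0 by apply: (mulfI nv12); rewrite e4 z00 !mulr0.
  have z30 : z3 = 0 by apply/eqP; rewrite -sqrf_eq0 e31 sqrf_eq0 z10.
  by case: nz.
have [->|nv22] := eqVneq v22 0; first by rewrite mulr0 !mul0r.
have nz1 : z1 != 0.
  by apply: contra_neq (mulf_neq0 nv22 nz0) => z10; rewrite -e4 z10 mulr0.
have factor0 c : u3 * z0 * z1 * c = 0 -> c = 0.
  by move/eqP; rewrite !mulf_eq0 (negbTE nu3) (negbTE nz0) (negbTE nz1) => /eqP.
move/eqP: e20; rewrite eqf_sqr => /orP[] /eqP ez2;
move/eqP: e31; rewrite eqf_sqr => /orP[] /eqP ez3.
- have -> : v21 - v11 - d = 0.
    by apply: factor0; apply: (hc_lagrange_comb z2 0 z0 0 0); rewrite x0 ez2 ez3; ring.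
  by rewrite !(mulr0, mul0r).
- have -> : - (v21 + v11 + d) = 0.
    by apply: factor0; apply: (hc_lagrange_comb z2 0 z0 0 0); rewrite x0 ez2 ez3; ring.
  by rewrite !(mulr0, mul0r).
- have -> : v21 + v11 - d = 0.
    by apply: factor0; apply: (hc_lagrange_comb (- z2) 0 (- z0) 0 0); rewrite x0 ez2 ez3; ring.
  by rewrite !(mulr0, mul0r).
- have -> : v11 - v21 - d = 0.
    by apply: factor0; apply: (hc_lagrange_comb (- z2) 0 (- z0) 0 0); rewrite x0 ez2 ez3; ring.
  by rewrite !(mulr0, mul0r).
Qed.

Lemma hc_lagrange_x_neq0 : u3 != 0 -> x != 0 -> hc_disc v11 v12 v21 v22 d = 0.
Proof.
move=> nu3 nx.
have [m m0 [ez0 ez2]] := conic_param two_neq0 nx quadric0.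
have [n n0 [ez1 ez3]] := conic_param two_neq0 nx quadric1.
have nxu3 : x * u3 != 0 by rewrite mulf_neq0.
(* z = x / (2 m n) w(m, n); pairing the Lagrange equations with w, dw/dm and
   dw/dn, which are tangent to q1 = q2 = 0, leaves u3 times q3(w) and its
   partial derivatives. *)
have F0 : hc_form v11 v12 v21 v22 d m n = 0.
  apply: (mulfI nxu3); rewrite mulr0.
  apply: (hc_lagrange_comb (n * (m ^+ 2 + 1)) (m * (n ^+ 2 + 1)) (n * (m ^+ 2 - 1))
    (m * (n ^+ 2 - 1)) (2 * m * n)).
  rewrite /hc_form /hcA /hcB /hcC ez0 ez1 ez2 ez3.
  by field; rewrite ?m0 ?n0 ?two_neq0.
have Fm0 : hc_form_dm v11 v12 v21 v22 d m n = 0.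
  apply: (mulfI (mulf_neq0 nxu3 (mulf_neq0 m0 n0))); rewrite mulr0.
  transitivity (x * u3 * (n * hc_form v11 v12 v21 v22 d m n
                          + m * n * hc_form_dm v11 v12 v21 v22 d m n)).
    by rewrite F0; ring.
  apply: (hc_lagrange_comb (2 * m * n * (2 * m * n)) (2 * m * n * (n ^+ 2 + 1))
    (2 * m * n * (2 * m * n)) (2 * m * n * (n ^+ 2 - 1)) (2 * m * n * (2 * n))).
  rewrite /hc_form /hc_form_dm /hcA /hcB /hcC ez0 ez1 ez2 ez3.
  by field; rewrite ?m0 ?n0 ?two_neq0.
have Fn0 : hc_form_dn v11 v12 v21 v22 d m n = 0.
  apply: (mulfI (mulf_neq0 nxu3 (mulf_neq0 m0 n0))); rewrite mulr0.
  transitivity (x * u3 * (m * hc_form v11 v12 v21 v22 d m n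
                          + m * n * hc_form_dn v11 v12 v21 v22 d m n)).
    by rewrite F0; ring.
  apply: (hc_lagrange_comb (2 * m * n * (m ^+ 2 + 1)) (2 * m * n * (2 * m * n))
    (2 * m * n * (m ^+ 2 - 1)) (2 * m * n * (2 * m * n)) (2 * m * n * (2 * m))).
  rewrite /hc_form /hc_form_dn /hcA /hcB /hcC ez0 ez1 ez2 ez3.
  by field; rewrite ?m0 ?n0 ?two_neq0.
exact: hc_disc_eq0 F0 Fm0 Fn0.
Qed.

Lemma hc_lagrange_imaginary : z0 = 0 -> z1 = 0 -> z2 = 1 -> z3 ^+ 2 = 1 -> x ^+ 2 = -1 ->
  [|| u1 != 0, u2 != 0 | u3 != 0] -> v11 ^+ 2 + v12 ^+ 2 = 0 /\ v21 ^+ 2 + v22 ^+ 2 = 0.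
Proof.
move=> z00 z10 z21 z33 xx nu.
have nz3 : z3 != 0 by rewrite -sqrf_eq0 z33 oner_eq0.
have nx : x != 0 by rewrite -sqrf_eq0 xx oppr_eq0 oner_eq0.
have u10 : u1 = 0.
  by apply: (mul2f_eq0 nz3); apply: (hc_lagrange_comb 0 0 0 (-1) 0); rewrite z00; ring.
have u20 : u2 = 0.
  by apply: (mul2f_eq0 nx); apply: (hc_lagrange_comb 0 0 0 0 1); rewrite z00 z10; ring.
move: nu; rewrite u10 u20 eqxx /= => nu3.
have e1 : v11 = - (v12 * x).
  apply/eqP; rewrite -addr_eq0; apply/eqP; apply: (mulfI nu3); rewrite mulr0.
  by apply: (hc_lagrange_comb 0 (-1) 0 0 0); rewrite z00 z10 z21 u10; ring.
have e2 : v21 * z3 = - (v22 * x).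
  apply/eqP; rewrite -addr_eq0; apply/eqP; apply: (mulfI nu3); rewrite mulr0.
  by apply: (hc_lagrange_comb 1 0 0 0 0); rewrite z00 z10 u10 u20; ring.
split; first by rewrite e1 sqrrN exprMn xx; ring.
have -> : v21 ^+ 2 = (v21 * z3) ^+ 2 by rewrite exprMn z33 mulr1.
by rewrite e2 sqrrN exprMn xx; ring.
Qed.

End LagrangeSystem.

Lemma mderivXU (n : nat) (R : comNzRingType) (i j : 'I_n) :
  ('X_j : {mpoly R[n]})^`M(i) = (j == i)%:R.
Proof.
rewrite mderivX mnm1E; case: eqP => [->|_]; last by rewrite scale0r.
by rewrite -{1}[U_(i)%MM]add0m addmK mpolyX0 scale1r.
Qed.

Lemma rank_lt_rowsP (F : fieldType) m n (M : 'M[F]_(m, n)) :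
  reflect (exists2 u : 'rV_m, u != 0 & u *m M = 0) (\rank M < m)%N.
Proof.
rewrite ltn_neqAle rank_leq_row andbT -/(row_free M) -kermx_eq0.
apply: (iffP rowV0Pn) => -[u uK u0]; exists u => //; first exact/sub_kermxP.
by apply/sub_kermxP.
Qed.

Lemma forall_ord5 (P : 'I_5 -> Prop) : P i0 -> P i1 -> P i2 -> P i3 -> P i4 -> forall i, P i.
Proof.
by move=> ? ? ? ? ? [[|[|[|[|[|//]]]]] hi]; rewrite (bool_irrelevance hi isT).
Qed.

Lemma row3_neq0 (R : nzRingType) (u1 u2 u3 : R) :
  (\row_(k < 3) [:: u1; u2; u3]`_k != 0) = [|| u1 != 0, u2 != 0 | u3 != 0].
Proof.
apply/idP/idP.
  apply: contraR; rewrite !negb_or !negbK => /and3P[/eqP-> /eqP-> /eqP->].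
  by apply/eqP/rowP => -[[|[|[|//]]] hk]; rewrite !mxE.
case/or3P=> /eqP nu; apply/eqP => /rowP u0; apply: nu.
- by move: (u0 0); rewrite !mxE.
- by move: (u0 1); rewrite !mxE.
- by move: (u0 2); rewrite !mxE.
Qed.

Section Curve.
Variable C : numClosedFieldType.
Implicit Types p z : 'I_5 -> C.

Lemma two_neq0 : 2 != 0 :> C. Proof. by rewrite pnatr_eq0. Qed.

Lemma nonzero5_not0 z : nonzero5 z -> ~ [/\ z i0 = 0, z i1 = 0, z i2 = 0, z i3 = 0 & z i4 = 0].
Proof.
by case=> i /eqP zi [z0 z1 z2 z3 z4]; apply: zi; move: i; exact: forall_ord5.
Qed.

Lemma on_HCP p z : on_HC p z <-> nonzero5 z /\
  [/\ z i2 ^+ 2 - z i0 ^+ 2 - (z i3 ^+ 2 - z i1 ^+ 2) = 0,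
      z i4 ^+ 2 + z i2 ^+ 2 - z i0 ^+ 2 = 0 &
      (v22 p * z i0 - v12 p * z i1) * z i4 + v21 p * z i0 * z i3
        - v11 p * z i1 * z i2 - dpar p * z i0 * z i1 = 0].
Proof.
have evalE (k : 'I_3) : (HCeqs p k).@[z] =
    [:: z i2 ^+ 2 - z i0 ^+ 2 - (z i3 ^+ 2 - z i1 ^+ 2); z i4 ^+ 2 + z i2 ^+ 2 - z i0 ^+ 2;
        (v22 p * z i0 - v12 p * z i1) * z i4 + v21 p * z i0 * z i3
          - v11 p * z i1 * z i2 - dpar p * z i0 * z i1]`_k.
  case: k => [[|[|[|//]]] hk]; rewrite /HCeqs /= /HCq1 /HCq2 /HCq3 /Z0 /Z1 /Z2 /Z3 /XX;
  by rewrite ?expr2 !(mevalD, mevalB, mevalN, mevalM, mevalC, mevalXU).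
split=> -[nz eqs]; split=> //.
  by split; [move: (eqs 0) | move: (eqs 1) | move: (eqs 2)]; rewrite evalE.
case: eqs => q1 q2 q3 k; rewrite evalE.
by case: k => [[|[|[|//]]] hk]; [exact: q1 | exact: q2 | exact: q3].
Qed.

Lemma HCjac_lagrange p z u1 u2 u3 :
  (\row_(k < 3) [:: u1; u2; u3]`_k) *m HCjac p z = 0 <->
  hc_lagrange (v11 p) (v12 p) (v21 p) (v22 p) (dpar p)
    (z i0) (z i1) (z i2) (z i3) (z i4) u1 u2 u3.
Proof.
have entryE (j : 'I_5) : ((\row_(k < 3) [:: u1; u2; u3]`_k) *m HCjac p z) 0 j =
  [:: u3 * (v22 p * z i4 + v21 p * z i3 - dpar p * z i1) - 2 * (u1 + u2) * z i0;
      2 * u1 * z i1 - u3 * (v12 p * z i4 + v11 p * z i2 + dpar p * z i0);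
      2 * (u1 + u2) * z i2 - u3 * v11 p * z i1;
      u3 * v21 p * z i0 - 2 * u1 * z i3;
      2 * u2 * z i4 + u3 * (v22 p * z i0 - v12 p * z i1)]`_j.
  rewrite !mxE !big_ord_recl big_ord0 !mxE /HCeqs /= /HCq1 /HCq2 /HCq3 /Z0 /Z1 /Z2 /Z3 /XX.
  rewrite ?expr2 !(mderivD, mderivB, mderivN, mderivM, mderivC, mderivXU).
  rewrite !(mevalD, mevalB, mevalN, mevalM, mevalC, mevalXU).
  by case: j => [[|[|[|[|[|//]]]]] hj] /=; rewrite ?meval0 ?meval1; ring.
rewrite /hc_lagrange; split=> [/rowP uJ | [l0 l1 l2 l3 l4]].
  by split; [move: (uJ i0) | move: (uJ i1) | move: (uJ i2) | move: (uJ i3) | move: (uJ i4)];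
    rewrite entryE mxE.
by apply/rowP; apply: forall_ord5; rewrite entryE mxE.
Qed.

Lemma HC_singularP p z : HC_singular p z <-> on_HC p z /\
  exists u1 u2 u3, [|| u1 != 0, u2 != 0 | u3 != 0] /\
    hc_lagrange (v11 p) (v12 p) (v21 p) (v22 p) (dpar p)
      (z i0) (z i1) (z i2) (z i3) (z i4) u1 u2 u3.
Proof.
rewrite /HC_singular; split=> -[onz sing]; split=> //.
  have /rank_lt_rowsP[u u0 uJ] := sing.
  have uE : u = \row_(k < 3) [:: u 0 0; u 0 1; u 0 2]`_k.
    by apply/rowP => -[[|[|[|//]]] hk]; rewrite mxE /=; congr (u 0 _); apply: val_inj.
  exists (u 0 0), (u 0 1), (u 0 2); rewrite -row3_neq0 -uE; split=> //.
  by apply/HCjac_lagrange; rewrite -uE.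
case: sing => u1 [u2 [u3 [nu lag]]]; apply/rank_lt_rowsP.
by exists (\row_(k < 3) [:: u1; u2; u3]`_k); [rewrite row3_neq0 | apply/HCjac_lagrange].
Qed.

Lemma HCp_multiple_singular p z k c :
  c != 0 -> (forall i, z i = c * HCp C k i) -> HC_singular p z.
Proof.
move=> c0 zE; apply/HC_singularP; split; first (apply/on_HCP; split).
- case: k zE => [[|[|[|[|//]]]] hk] zE; [exists i2 | exists i3 | exists i3 | exists i2];
  by rewrite zE /HCp /vec5 /= mulr1.
- by rewrite !zE; case: k {zE} => [[|[|[|[|//]]]] hk]; rewrite /HCp /vec5 /=; split; ring.
rewrite !zE; case: k {zE} => [[|[|[|[|//]]]] hk]; rewrite /HCp /vec5 /=;
  [exists 1, (-1), 0 | exists 0, 1, 0 | exists 0, 1, 0 | exists 1, (-1), 0];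
  (split; first by rewrite ?oner_eq0 ?eqxx); by split; ring.
Qed.

Lemma HCp_singular p k : HC_singular p (HCp C k).
Proof. by apply: (HCp_multiple_singular (k := k) _ (oner_neq0 C)) => i; rewrite mul1r. Qed.

Lemma HCq_not_singular p k : nondeg_v p -> ~ HC_singular p (HCq C k).
Proof.
move=> nd /HC_singularP[_ [u1 [u2 [u3 [nu]]]]].
case: k => [[|[|[|[|//]]]] hk]; rewrite /HCq /vec5 /= => lag;
  have [] := hc_lagrange_imaginary lag two_neq0 erefl erefl erefl _ _ nu;
  rewrite ?sqrrN ?expr1n ?sqrCi // => h1 h2;
  by case: nd => /eqP; apply.
Qed.

Lemma proj_eq_HCp_x0 z : nonzero5 z -> z i4 = 0 ->
  z i1 = 0 /\ z i3 = 0 /\ z i2 ^+ 2 = z i0 ^+ 2 \/ z i0 = 0 /\ z i2 = 0 /\ z i3 ^+ 2 = z i1 ^+ 2 ->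
  exists k, proj_eq z (HCp C k).
Proof.
move=> /nonzero5_not0 nz x0 [[z10 [z30 /eqP]] | [z00 [z20 /eqP]]]; rewrite eqf_sqr => /orP[]/eqP e.
- have z0n : z i0 != 0 by apply/eqP => z00; apply: nz; split; rewrite // e.
  exists 3, (z i0); split=> //.
  by apply: forall_ord5; rewrite /HCp /vec5 /= ?x0 ?z10 ?z30 ?e; ring.
- have z0n : z i0 != 0 by apply/eqP => z00; apply: nz; split; rewrite // e z00 oppr0.
  exists 0, (- z i0); split; first by rewrite oppr_eq0.
  by apply: forall_ord5; rewrite /HCp /vec5 /= ?x0 ?z10 ?z30 ?e; ring.
- have z1n : z i1 != 0 by apply/eqP => z10; apply: nz; split; rewrite // e.
  exists 2, (z i1); split=> //.
  by apply: forall_ord5; rewrite /HCp /vec5 /= ?x0 ?z00 ?z20 ?e; ring.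
- have z1n : z i1 != 0 by apply/eqP => z10; apply: nz; split; rewrite // e z10 oppr0.
  exists 1, (- z i1); split; first by rewrite oppr_eq0.
  by apply: forall_ord5; rewrite /HCp /vec5 /= ?x0 ?z00 ?z20 ?e; ring.
Qed.

Lemma HC_singular_classify p z :
  hc_generic_poly (v11 p) (v12 p) (v21 p) (v22 p) (dpar p) != 0 ->
  HC_singular p z -> exists k, proj_eq z (HCp C k).
Proof.
move=> P0 /HC_singularP[/on_HCP[nz [q1 q2 _]] [u1 [u2 [u3 [nu lag]]]]].
have quadric0 : z i4 ^+ 2 = z i0 ^+ 2 - z i2 ^+ 2.
  by apply/eqP; rewrite -subr_eq0; apply/eqP; rewrite -q2; ring.
have quadric1 : z i4 ^+ 2 = z i1 ^+ 2 - z i3 ^+ 2.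
  by apply/eqP; rewrite -subr_eq0; apply/eqP; rewrite -(subr0 0) -{1}q2 -q1; ring.
have [u30|nu3] := eqVneq u3 0.
  rewrite u30 eqxx orbF in nu.
  have [x0 zs] := hc_lagrange_u3_eq0 lag two_neq0 quadric0 quadric1 u30 nu.
  exact: proj_eq_HCp_x0 nz x0 zs.
move: P0; rewrite /hc_generic_poly; have [x0|nx] := eqVneq (z i4) 0.
  have nz' : ~ [/\ z i0 = 0, z i1 = 0, z i2 = 0 & z i3 = 0].
    by case=> *; apply: (nonzero5_not0 nz).
  by rewrite (hc_lagrange_x_eq0 lag quadric0 quadric1 nu3 x0 nz') mulr0 mul0r eqxx.
by rewrite (hc_lagrange_x_neq0 lag two_neq0 quadric0 quadric1 nu3 nx) !mul0r eqxx.
Qed.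

Definition hc_generic_mpoly : {mpoly C[5]} := hc_generic_poly 'X_i0 'X_i1 'X_i2 'X_i3 'X_i4.

Lemma hc_generic_mpoly_dhomog : hc_generic_mpoly \is 20.-homog.
Proof.
by rewrite /hc_generic_mpoly; apply: hc_generic_poly_dhomog; rewrite dhomogX; apply/eqP/mdeg1.
Qed.

Lemma meval_hc_generic_mpoly p :
  hc_generic_mpoly.@[p] = hc_generic_poly (v11 p) (v12 p) (v21 p) (v22 p) (dpar p).
Proof.
by rewrite /hc_generic_mpoly rmorph_hc_generic_poly /= !mevalXU.
Qed.
End Curve.

Lemma hc_generic_poly_neq0 (R : numDomainType) : hc_generic_poly (0 : R) 1 0 1 1 != 0.
Proof.
have -> : hc_generic_poly (0 : R) 1 0 1 1 = - (3 * 2 ^+ 24).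
  by rewrite /hc_generic_poly /hc_disc /hc_x0_factor /quartic_disc; ring.
by rewrite oppr_eq0 mulf_neq0 ?expf_neq0 ?pnatr_eq0.
Qed.

Theorem lemma5p5 (C : numClosedFieldType) :
  (forall (p : 'I_5 -> C), nonzero5 p ->
     forall k : 'I_4, HC_singular p (@HCp C k))
  /\
  (forall (p : 'I_5 -> C), nonzero5 p -> nondeg_v p ->
     forall k : 'I_4, ~ HC_singular p (@HCq C k))
  /\
  (exists S : seq {mpoly C[5]},
     homog_family S
     /\ (exists p0 : 'I_5 -> C, nonzero5 p0 /\ outside_zeros S p0)
     /\ (forall p : 'I_5 -> C, nonzero5 p -> outside_zeros S p ->
           nondeg_v p
           /\ (forall z : 'I_5 -> C,
                 HC_singular p z <-> exists k : 'I_4, proj_eq z (@HCp C k)))).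
Proof.
split; first by move=> p _ k; exact: HCp_singular.
split; first by move=> p _ nd k; exact: HCq_not_singular.
exists [:: hc_generic_mpoly C]; split.
  by move=> P; rewrite inE => /eqP ->; exists 20%N; exact: hc_generic_mpoly_dhomog.
split.
  exists (vec5 0 1 0 1 1); split; first by exists i1; rewrite /vec5 /= oner_neq0.
  by exists (hc_generic_mpoly C); rewrite ?inE // meval_hc_generic_mpoly hc_generic_poly_neq0.
move=> p _ [P]; rewrite inE => /eqP -> {P}; rewrite meval_hc_generic_mpoly => P0.
split; first by left; apply: contraNneq P0 => nd0; rewrite /hc_generic_poly nd0 mulr0.
move=> z; split; first exact: HC_singular_classify.
by case=> k [c [c0 zE]]; exact: HCp_multiple_singular c0 zE.
Qed.
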